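(* Let $\mathcal{A}$ be an essentially small abelian category, and let $\mathrm{K}_0^{\mathrm{heap}}(\mathcal{A})$ denote its Grothendieck heap. Let $\overline{0}\in \mathrm{K}_0^{\mathrm{heap}}(\mathcal{A})$ be the class of the zero object. Then the map $\psi:\mathrm{K}_0^{\mathrm{heap}}(\mathcal{A})\to \mathrm{K}_0(\mathcal{A})_c$, $\overline{A}\mapsto \overline{A}_c$, is well defined and is an isomorphism of groups $\left(\mathrm{K}_0^{\mathrm{heap}}(\mathcal{A}),+_{\overline{0}}\right)\cong \mathrm{K}_0(\mathcal{A})_c$; that is, the retract of the Grothendieck heap along the class of the zero object recovers the classical Grothendieck group.
   Context: A heap is a set $H$ with a ternary operation $[\_,\_,\_]:H^3\to H$ satisfying $[a,b,[c,d,e]]=[[a,b,c],d,e]$ and $[x,x,y]=y=[y,x,x]$. For $e\in H$, the retract of $H$ along $e$ is the group $(H,+_e)$ with $a+_e b:=[a,e,b]$. For an essentially small category $\mathcal{C}$, its Grothendieck heap $\mathrm{K}_0^{\mathrm{heap}}(\mathcal{C})$ is the heap generated by the isomorphism classes $\overline{X}$ of objects of $\mathcal{C}$, subject to the relations $[\overline{X},\overline{Y},\overline{Z}]=\overline{X\sqcup_Y Z}$ for every pushout square $X\leftarrow Y\rightarrow Z$ in $\mathcal{C}$ in which at least one of the two maps $Y\to X$, $Y\to Z$ is a monomorphism. The classical Grothendieck group $\mathrm{K}_0(\mathcal{A})_c$ of an abelian category is the abelian group generated by classes $\overline{A}_c$ of isomorphism classes of objects subject to $\overline{B}_c=\overline{A}_c+\overline{C}_c$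 whenever there is a short exact sequence $0\to A\to B\to C\to 0$. *)

Set Implicit Arguments.
Unset Strict Implicit.

Record Category := {
  Ob :> Type;
  Hom : Ob -> Ob -> Type;
  idm : forall a, Hom a a;
  comp : forall a b c, Hom b c -> Hom a b -> Hom a c;
  comp_id_l : forall a b (f : Hom a b), comp (idm b) f = f;
  comp_id_r : forall a b (f : Hom a b), comp f (idm a) = f;
  comp_assoc : forall a b c d (h : Hom c d) (g : Hom b c) (f : Hom a b),
      comp h (comp g f) = comp (comp h g) f }.

Arguments Hom {c} a b : rename.
Arguments idm {c} a : rename.
Arguments comp {c a b c0} g f : rename.

Section CatDefs.
Variable C : Category.

Definition mono {a b : C} (f : Hom a b) : Prop :=
  forall x (g h : Hom x a), comp f g = comp f h -> g = h.

Definition epi {a b : C} (f : Hom a b) : Prop :=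
  forall x (g h : Hom b x), comp g f = comp h f -> g = h.

Definition is_iso {a b : C} (f : Hom a b) : Prop :=
  exists g : Hom b a, comp g f = idm a /\ comp f g = idm b.

Definition isomorphic (a b : C) : Prop := exists f : Hom a b, is_iso f.

Definition is_zero_obj (z : C) : Prop :=
  forall a : C, (exists f : Hom z a, forall g, g = f) /\
                (exists f : Hom a z, forall g, g = f).

Definition zero_mor {a b : C} (f : Hom a b) : Prop :=
  exists (z : C) (u : Hom a z) (v : Hom z b), is_zero_obj z /\ f = comp v u.

Definition is_kernel {a b K : C} (f : Hom a b) (k : Hom K a) : Prop :=
  zero_mor (comp f k) /\
  forall x (g : Hom x a), zero_mor (comp f g) ->
    exists h : Hom x K, comp k h = g /\ forall h', comp k h' = g -> h' = h.

Definition is_cokernel {a b Q : C} (f : Hom a b) (q : Hom b Q) : Prop :=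
  zero_mor (comp q f) /\
  forall x (g : Hom b x), zero_mor (comp g f) ->
    exists h : Hom Q x, comp h q = g /\ forall h', comp h' q = g -> h' = h.

Definition is_product {a b P : C} (p1 : Hom P a) (p2 : Hom P b) : Prop :=
  forall x (f : Hom x a) (g : Hom x b),
    exists h : Hom x P, (comp p1 h = f /\ comp p2 h = g) /\
      forall h', comp p1 h' = f -> comp p2 h' = g -> h' = h.

Definition is_coproduct {a b P : C} (i1 : Hom a P) (i2 : Hom b P) : Prop :=
  forall x (f : Hom a x) (g : Hom b x),
    exists h : Hom P x, (comp h i1 = f /\ comp h i2 = g) /\
      forall h', comp h' i1 = f -> comp h' i2 = g -> h' = h.

Definition is_pushout {X Y Z P : C} (f : Hom Y X) (g : Hom Y Z)
    (i1 : Hom X P) (i2 : Hom Z P) : Prop :=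
  comp i1 f = comp i2 g /\
  forall W (u : Hom X W) (v : Hom Z W), comp u f = comp v g ->
    exists h : Hom P W, (comp h i1 = u /\ comp h i2 = v) /\
      forall h', comp h' i1 = u -> comp h' i2 = v -> h' = h.

(* The (unique) additive structure
   is a consequence. *)
Definition is_abelian : Prop :=
  (exists z : C, is_zero_obj z) /\
  (forall a b : C, exists (P : C) (p1 : Hom P a) (p2 : Hom P b), is_product p1 p2) /\
  (forall a b : C, exists (P : C) (i1 : Hom a P) (i2 : Hom b P), is_coproduct i1 i2) /\
  (forall (a b : C) (f : Hom a b), exists (K : C) (k : Hom K a), is_kernel f k) /\
  (forall (a b : C) (f : Hom a b), exists (Q : C) (q : Hom b Q), is_cokernel f q) /\
  (forall (a b : C) (f : Hom a b), mono f ->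
      exists (c : C) (g : Hom b c), is_kernel g f) /\
  (forall (a b : C) (f : Hom a b), epi f ->
      exists (c : C) (g : Hom c a), is_cokernel g f).

Definition short_exact {A B D : C} (f : Hom A B) (g : Hom B D) : Prop :=
  mono f /\ epi g /\ is_kernel g f.

Inductive hterm : Type :=
  | hgen : Ob C -> hterm
  | hbr : hterm -> hterm -> hterm -> hterm.

Inductive hrel : hterm -> hterm -> Prop :=
  | hrel_refl t : hrel t t
  | hrel_sym s t : hrel s t -> hrel t s
  | hrel_trans s t u : hrel s t -> hrel t u -> hrel s u
  | hrel_cong s s' t t' u u' : hrel s s' -> hrel t t' -> hrel u u' ->
      hrel (hbr s t u) (hbr s' t' u')
  | hrel_assoc a b c d e :
      hrel (hbr a b (hbr c d e)) (hbr (hbr a b c) d e)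
  | hrel_mal_l x y : hrel (hbr x x y) y
  | hrel_mal_r x y : hrel (hbr y x x) y
  (* generators are isomorphism classes *)
  | hrel_iso a b : isomorphic a b -> hrel (hgen a) (hgen b)
  | hrel_pushout (X Y Z P : C) (f : Hom Y X) (g : Hom Y Z)
      (i1 : Hom X P) (i2 : Hom Z P) :
      is_pushout f g i1 i2 -> mono f \/ mono g ->
      hrel (hbr (hgen X) (hgen Y) (hgen Z)) (hgen P).

Inductive gterm : Type :=
  | ggen : Ob C -> gterm
  | gzero : gterm
  | gadd : gterm -> gterm -> gterm
  | gneg : gterm -> gterm.

Inductive grel : gterm -> gterm -> Prop :=
  | grel_refl t : grel t t
  | grel_sym s t : grel s t -> grel t s
  | grel_trans s t u : grel s t -> grel t u -> grel s u
  | grel_cong_add s s' t t' : grel s s' -> grel t t' -> grel (gadd s t) (gadd s' t')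
  | grel_cong_neg s s' : grel s s' -> grel (gneg s) (gneg s')
  | grel_assoc x y z : grel (gadd x (gadd y z)) (gadd (gadd x y) z)
  | grel_comm x y : grel (gadd x y) (gadd y x)
  | grel_zero x : grel (gadd gzero x) x
  | grel_neg x : grel (gadd (gneg x) x) gzero
  | grel_iso a b : isomorphic a b -> grel (ggen a) (ggen b)
  | grel_ses (A B D : C) (f : Hom A B) (g : Hom B D) :
      short_exact f g -> grel (ggen B) (gadd (ggen A) (ggen D)).

End CatDefs.

Arguments hgen {C} _.
Arguments hbr {C} _ _ _.
Arguments ggen {C} _.
Arguments gzero {C}.
Arguments gadd {C} _ _.
Arguments gneg {C} _.
Arguments hrel : clear implicits.
Arguments grel : clear implicits.

Definition quot (T : Type) (R : T -> T -> Prop) : Type :=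
  { P : T -> Prop | exists t, forall u, P u <-> R t u }.

Definition cls (T : Type) (R : T -> T -> Prop) (t : T) : quot R :=
  exist (fun P : T -> Prop => exists t0, forall u, P u <-> R t0 u)
        (R t) (ex_intro _ t (fun u => iff_refl (R t u))).

(* K_0^heap(C): heap presented by hterm / hrel (ternary op [cls s, cls t, cls u] = cls (hbr s t u)) *)
Definition K0heap (C : Category) : Type := quot (hrel C).
(* K_0(C)_c: abelian group presented by gterm / grel (cls u + cls v = cls (gadd u v)) *)
Definition K0c (C : Category) : Type := quot (grel C).

(* Send a heap term to the group term obtained by reading [x, y, w] as x - y + w.
   This respects the heap relations because, for a pushout P of a mono f : Y -> X
   along g : Y -> Z, the leg Z -> P is again mono with the same cokernel Q as f, so
   [X] = [Y] + [Q] and [P] = [Z] + [Q] give [P] = [X] - [Y] + [Z].  Conversely, in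
   the heap x + y := [x, 0, y] is commutative, since A ⊔ B is the pushout of
   A <- 0 -> B, and a short exact sequence A -> B -> D makes D the pushout of
   0 <- A -> B, so [B] = [A] + [D]; the group relations therefore hold in the heap,
   and the two translations are mutually inverse. *)

From Stdlib Require Import Setoid Morphisms.
From Stdlib Require Import FunctionalExtensionality PropExtensionality ProofIrrelevance
  IndefiniteDescription.

Local Notation "g ∘ f" := (comp g f) (at level 40, left associativity).
Local Notation "x +' y" := (gadd x y) (at level 50, left associativity).
Local Notation "-' x" := (gneg x) (at level 35).

#[local] Instance grel_equiv (C : Category) : Equivalence (grel C).
Proof.
  split; [intro; apply grel_refl | intros ??; apply grel_sym | intros ???; apply grel_trans].
Qed.

#[local] Instance gadd_proper (C : Category) : Proper (grel C ==> grel C ==> grel C) (@gadd C).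
Proof. intros ?? H ?? H'. apply grel_cong_add; auto. Qed.

#[local] Instance gneg_proper (C : Category) : Proper (grel C ==> grel C) (@gneg C).
Proof. intros ?? H. apply grel_cong_neg; auto. Qed.

#[local] Instance hrel_equiv (C : Category) : Equivalence (hrel C).
Proof.
  split; [intro; apply hrel_refl | intros ??; apply hrel_sym | intros ???; apply hrel_trans].
Qed.

#[local] Instance hbr_proper (C : Category) :
  Proper (hrel C ==> hrel C ==> hrel C ==> hrel C) (@hbr C).
Proof. intros ?? H ?? H' ?? H''. apply hrel_cong; auto. Qed.

Section Theory.
Variable C : Category.
Implicit Types a b c x A B D K P Q T U W X Y Z : Ob C.

Lemma mono_comp {a b c} {f : Hom a b} {g : Hom b c} : mono f -> mono g -> mono (g ∘ f).
Proof. intros Hf Hg x u v E. apply Hf, Hg. rewrite !comp_assoc. auto. Qed.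

Lemma epi_comp {a b c} {f : Hom a b} {g : Hom b c} : epi f -> epi g -> epi (g ∘ f).
Proof. intros Hf Hg x u v E. apply Hg, Hf. rewrite <- !comp_assoc. auto. Qed.

Lemma mono_of_comp {a b c} (f : Hom a b) (g : Hom b c) : mono (g ∘ f) -> mono f.
Proof. intros H x u v E. apply H. rewrite <- !comp_assoc, E. auto. Qed.

Lemma epi_of_comp {a b c} (f : Hom a b) (g : Hom b c) : epi (g ∘ f) -> epi g.
Proof. intros H x u v E. apply H. rewrite !comp_assoc, E. auto. Qed.

Lemma split_mono {a b} (f : Hom a b) (r : Hom b a) : r ∘ f = idm a -> mono f.
Proof.
  intros H. apply (mono_of_comp f r). rewrite H.
  intros x u v E. rewrite !comp_id_l in E. auto.
Qed.

Lemma split_epi {a b} (f : Hom a b) (s : Hom b a) : f ∘ s = idm b -> epi f.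
Proof.
  intros H. apply (epi_of_comp s f). rewrite H.
  intros x u v E. rewrite !comp_id_r in E. auto.
Qed.

Lemma product_lift {a b P} {p1 : Hom P a} {p2 : Hom P b} (Hp : is_product p1 p2)
    {x} (f : Hom x a) (g : Hom x b) :
  exists h, p1 ∘ h = f /\ p2 ∘ h = g.
Proof. destruct (Hp x f g) as [h [Hh _]]. eauto. Qed.

Lemma product_hom_ext {a b P} {p1 : Hom P a} {p2 : Hom P b} (Hp : is_product p1 p2)
    {x} (h h' : Hom x P) :
  p1 ∘ h = p1 ∘ h' -> p2 ∘ h = p2 ∘ h' -> h = h'.
Proof.
  intros E1 E2. destruct (Hp x (p1 ∘ h) (p2 ∘ h)) as [w [_ Hw]].
  rewrite (Hw h eq_refl eq_refl), (Hw h' (eq_sym E1) (eq_sym E2)). auto.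
Qed.

Lemma coproduct_desc {a b P} {j1 : Hom a P} {j2 : Hom b P} (Hc : is_coproduct j1 j2)
    {x} (f : Hom a x) (g : Hom b x) :
  exists h, h ∘ j1 = f /\ h ∘ j2 = g.
Proof. destruct (Hc x f g) as [h [Hh _]]. eauto. Qed.

Lemma coproduct_hom_ext {a b P} {j1 : Hom a P} {j2 : Hom b P} (Hc : is_coproduct j1 j2)
    {x} (h h' : Hom P x) :
  h ∘ j1 = h' ∘ j1 -> h ∘ j2 = h' ∘ j2 -> h = h'.
Proof.
  intros E1 E2. destruct (Hc x (h ∘ j1) (h ∘ j2)) as [w [_ Hw]].
  rewrite (Hw h eq_refl eq_refl), (Hw h' (eq_sym E1) (eq_sym E2)). auto.
Qed.

Lemma coproduct_sym {a b P} {j1 : Hom a P} {j2 : Hom b P} :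
  is_coproduct j1 j2 -> is_coproduct j2 j1.
Proof.
  intros Hc x f g. destruct (Hc x g f) as [h [[H1 H2] Hu]].
  exists h. split; [auto | intros h' E1 E2; apply Hu; auto].
Qed.

Lemma pushout_sym {X Y Z P} {f : Hom Y X} {g : Hom Y Z} {i1 : Hom X P} {i2 : Hom Z P} :
  is_pushout f g i1 i2 -> is_pushout g f i2 i1.
Proof.
  intros [Hsq Hu]. split; auto. intros W u v E.
  destruct (Hu W v u (eq_sym E)) as [h [[E1 E2] Hh]].
  exists h. split; [auto | intros h' F1 F2; apply Hh; auto].
Qed.

Lemma pushout_hom_ext {X Y Z P} {f : Hom Y X} {g : Hom Y Z} {i1 : Hom X P} {i2 : Hom Z P}
    (Hpo : is_pushout f g i1 i2) {W} (h h' : Hom P W) :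
  h ∘ i1 = h' ∘ i1 -> h ∘ i2 = h' ∘ i2 -> h = h'.
Proof.
  intros E1 E2. destruct Hpo as [Hsq Hu].
  destruct (Hu W (h ∘ i1) (h ∘ i2)) as [w [_ Hw]].
  { rewrite <- !comp_assoc, Hsq. auto. }
  rewrite (Hw h eq_refl eq_refl), (Hw h' (eq_sym E1) (eq_sym E2)). auto.
Qed.

Variable z : Ob C.
Hypothesis Hz : is_zero_obj z.

Definition to_zero a : Hom a z :=
  proj1_sig (constructive_indefinite_description _ (proj2 (Hz a))).

Definition from_zero a : Hom z a :=
  proj1_sig (constructive_indefinite_description _ (proj1 (Hz a))).

Lemma to_zero_unique {a} (g : Hom a z) : g = to_zero a.
Proof. unfold to_zero. destruct constructive_indefinite_description; simpl; auto. Qed.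

Lemma from_zero_unique {a} (g : Hom z a) : g = from_zero a.
Proof. unfold from_zero. destruct constructive_indefinite_description; simpl; auto. Qed.

Lemma from_zero_mono a : mono (from_zero a).
Proof. intros x g h _. rewrite (to_zero_unique g), (to_zero_unique h). auto. Qed.

Definition zero_hom a b : Hom a b := from_zero b ∘ to_zero a.

Lemma zero_hom_zero_mor a b : zero_mor (zero_hom a b).
Proof. exists z, (to_zero a), (from_zero b). auto. Qed.

Lemma zero_morE {a b} (f : Hom a b) : zero_mor f -> f = zero_hom a b.
Proof.
  intros [z' [u [v [Hz' ->]]]].
  destruct (proj1 (Hz' b)) as [f0 Hf0]. destruct (proj1 (Hz' z)) as [t _].
  assert (Hv : v = from_zero b ∘ t) by (rewrite (Hf0 v), (Hf0 (from_zero b ∘ t)); auto).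
  rewrite Hv, <- comp_assoc. unfold zero_hom. f_equal. apply to_zero_unique.
Qed.

Lemma zero_hom_comp {a b c} (f : Hom a b) : zero_hom b c ∘ f = zero_hom a c.
Proof. unfold zero_hom. rewrite <- comp_assoc. f_equal. apply to_zero_unique. Qed.

Lemma comp_zero_hom {a b c} (g : Hom b c) : g ∘ zero_hom a b = zero_hom a c.
Proof. unfold zero_hom. rewrite comp_assoc. f_equal. apply from_zero_unique. Qed.

Lemma mono_comp_zero {a b x} {f : Hom a b} {h : Hom x a} :
  mono f -> f ∘ h = zero_hom x b -> h = zero_hom x a.
Proof. intros Hf H. apply Hf. rewrite H, comp_zero_hom. auto. Qed.

Lemma kernel_comp {a b K} {f : Hom a b} {k : Hom K a} :
  is_kernel f k -> f ∘ k = zero_hom K b.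
Proof. intros [H _]. apply zero_morE, H. Qed.

Lemma kernel_factor {a b K x} {f : Hom a b} {k : Hom K a} (Hk : is_kernel f k) (g : Hom x a) :
  f ∘ g = zero_hom x b -> exists h, k ∘ h = g.
Proof.
  intros E. destruct (proj2 Hk x g) as [h [Hh _]]; eauto.
  rewrite E. apply zero_hom_zero_mor.
Qed.

Lemma kernel_mono {a b K} {f : Hom a b} {k : Hom K a} : is_kernel f k -> mono k.
Proof.
  intros [H0 H] x g h E. destruct (H x (k ∘ g)) as [w [_ Hw]].
  - rewrite comp_assoc, (zero_morE _ H0), zero_hom_comp. apply zero_hom_zero_mor.
  - rewrite (Hw g eq_refl), (Hw h (eq_sym E)). auto.
Qed.

Lemma cokernel_comp {a b Q} {f : Hom a b} {q : Hom b Q} :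
  is_cokernel f q -> q ∘ f = zero_hom a Q.
Proof. intros [H _]. apply zero_morE, H. Qed.

Lemma cokernel_factor {a b Q x} {f : Hom a b} {q : Hom b Q} (Hq : is_cokernel f q) (g : Hom b x) :
  g ∘ f = zero_hom a x -> exists h, h ∘ q = g.
Proof.
  intros E. destruct (proj2 Hq x g) as [h [Hh _]]; eauto.
  rewrite E. apply zero_hom_zero_mor.
Qed.

Lemma cokernel_epi {a b Q} {f : Hom a b} {q : Hom b Q} : is_cokernel f q -> epi q.
Proof.
  intros [H0 H] x g h E. destruct (H x (g ∘ q)) as [w [_ Hw]].
  - rewrite <- comp_assoc, (zero_morE _ H0), comp_zero_hom. apply zero_hom_zero_mor.
  - rewrite (Hw g eq_refl), (Hw h (eq_sym E)). auto.
Qed.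

Hypothesis HC : is_abelian C.

Lemma product_exists a b : exists P (p1 : Hom P a) (p2 : Hom P b), is_product p1 p2.
Proof. apply HC. Qed.

Lemma coproduct_exists a b : exists P (j1 : Hom a P) (j2 : Hom b P), is_coproduct j1 j2.
Proof. apply HC. Qed.

Lemma kernel_exists {a b} (f : Hom a b) : exists K (k : Hom K a), is_kernel f k.
Proof. apply HC. Qed.

Lemma cokernel_exists {a b} (f : Hom a b) : exists Q (q : Hom b Q), is_cokernel f q.
Proof. apply HC. Qed.

Lemma mono_is_kernel {a b} (f : Hom a b) : mono f -> exists c (g : Hom b c), is_kernel g f.
Proof. apply HC. Qed.

Lemma epi_is_cokernel {a b} (f : Hom a b) : epi f -> exists c (g : Hom c a), is_cokernel g f.
Proof. apply HC. Qed.

Lemma kernel_of_mono_cokernel {a b Q} {f : Hom a b} {q : Hom b Q} :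
  mono f -> is_cokernel f q -> is_kernel q f.
Proof.
  intros Hf Hq. destruct (mono_is_kernel f Hf) as [c [g Hg]].
  destruct (cokernel_factor Hq g (kernel_comp Hg)) as [w Hw].
  split. { rewrite (cokernel_comp Hq). apply zero_hom_zero_mor. }
  intros x h Hh. apply zero_morE in Hh.
  destruct (kernel_factor Hg h) as [t Ht].
  { rewrite <- Hw, <- comp_assoc, Hh, comp_zero_hom. auto. }
  exists t. split; auto. intros t' E. apply Hf. congruence.
Qed.

Lemma cokernel_of_epi_kernel {a b K} {g : Hom a b} {k : Hom K a} :
  epi g -> is_kernel g k -> is_cokernel k g.
Proof.
  intros Hg Hk. destruct (epi_is_cokernel g Hg) as [c [f Hf]].
  destruct (kernel_factor Hk f (cokernel_comp Hf)) as [w Hw].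
  split. { rewrite (kernel_comp Hk). apply zero_hom_zero_mor. }
  intros x h Hh. apply zero_morE in Hh.
  destruct (cokernel_factor Hf h) as [t Ht].
  { rewrite <- Hw, comp_assoc, Hh, zero_hom_comp. auto. }
  exists t. split; auto. intros t' E. apply Hg. congruence.
Qed.

Lemma product_injections_exist a b :
  exists P (p1 : Hom P a) (p2 : Hom P b) (i1 : Hom a P) (i2 : Hom b P),
    is_product p1 p2 /\ p1 ∘ i1 = idm a /\ p2 ∘ i1 = zero_hom a b /\
    p1 ∘ i2 = zero_hom b a /\ p2 ∘ i2 = idm b.
Proof.
  destruct (product_exists a b) as [P [p1 [p2 Hp]]].
  destruct (product_lift Hp (idm a) (zero_hom a b)) as [i1 [H11 H21]].
  destruct (product_lift Hp (zero_hom b a) (idm b)) as [i2 [H12 H22]].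
  exists P, p1, p2, i1, i2. auto.
Qed.

Lemma equalizer_exists {a b} (x y : Hom a b) :
  exists E (k : Hom E a), mono k /\ x ∘ k = y ∘ k /\
    forall W (e : Hom W a), x ∘ e = y ∘ e -> exists e', k ∘ e' = e.
Proof.
  destruct (product_exists a b) as [P [p1 [p2 Hp]]].
  destruct (product_lift Hp (idm a) x) as [gx [Hgx1 Hgx2]].
  destruct (product_lift Hp (idm a) y) as [gy [Hgy1 Hgy2]].
  destruct (mono_is_kernel gx (split_mono gx p1 Hgx1)) as [c [s Hs]].
  destruct (kernel_exists (s ∘ gy)) as [E [k Hk]].
  exists E, k. split; [|split].
  - exact (kernel_mono Hk).
  - destruct (kernel_factor Hs (gy ∘ k)) as [j Hj].
    { rewrite comp_assoc. apply (kernel_comp Hk). }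
    assert (Hjk : j = k).
    { rewrite <- (comp_id_l j), <- Hgx1, <- comp_assoc, Hj, comp_assoc, Hgy1, comp_id_l. auto. }
    rewrite <- Hgx2, <- Hgy2, <- !comp_assoc, <- Hj, Hjk. auto.
  - intros W e He. apply (kernel_factor Hk).
    assert (Hge : gy ∘ e = gx ∘ e).
    { apply (product_hom_ext Hp); rewrite !comp_assoc; rewrite ?Hgx1, ?Hgy1, ?Hgx2, ?Hgy2; auto. }
    rewrite <- comp_assoc, Hge, comp_assoc, (kernel_comp Hs), zero_hom_comp. auto.
Qed.

Lemma image_epi {a b Q I} {f : Hom a b} {q : Hom b Q} {m : Hom I b} {e : Hom a I} :
  is_cokernel f q -> is_kernel q m -> m ∘ e = f -> epi e.
Proof.
  intros Hq Hm Hf T x y Exy.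
  destruct (equalizer_exists x y) as [E [k [Hk [Hxy Heq]]]].
  destruct (Heq a e Exy) as [e' He'].
  destruct (mono_is_kernel (m ∘ k) (mono_comp Hk (kernel_mono Hm))) as [c [s Hs]].
  destruct (cokernel_factor Hq s) as [t Ht].
  { rewrite <- Hf, <- He', !comp_assoc, <- (comp_assoc s m k), (kernel_comp Hs), zero_hom_comp.
    auto. }
  destruct (kernel_factor Hs m) as [j Hj].
  { rewrite <- Ht, <- comp_assoc, (kernel_comp Hm), comp_zero_hom. auto. }
  assert (Hkj : k ∘ j = idm I).
  { apply (kernel_mono Hm). rewrite comp_id_r, comp_assoc. auto. }
  rewrite <- (comp_id_r x), <- (comp_id_r y), <- Hkj, !comp_assoc, Hxy. auto.
Qed.

Lemma image_factorization {a b} (f : Hom a b) :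
  exists Q (q : Hom b Q) I (m : Hom I b) (e : Hom a I),
    is_cokernel f q /\ is_kernel q m /\ m ∘ e = f /\ epi e /\ mono m.
Proof.
  destruct (cokernel_exists f) as [Q [q Hq]].
  destruct (kernel_exists q) as [I [m Hm]].
  destruct (kernel_factor Hm f (cokernel_comp Hq)) as [e He].
  exists Q, q, I, m, e.
  split; [|split; [|split; [|split]]]; auto.
  - exact (image_epi Hq Hm He).
  - exact (kernel_mono Hm).
Qed.

Lemma mono_of_zero_kernel {a b} (f : Hom a b) :
  (forall x (h : Hom x a), f ∘ h = zero_hom x b -> h = zero_hom x a) -> mono f.
Proof.
  intros H.
  destruct (image_factorization f) as [Q [q [I [m [e [_ [_ [He [Ee Mm]]]]]]]]].
  destruct (epi_is_cokernel e Ee) as [c [h Hh]].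
  assert (Hh0 : h = zero_hom c a).
  { apply H. rewrite <- He, <- comp_assoc, (cokernel_comp Hh), comp_zero_hom. auto. }
  rewrite Hh0 in Hh.
  destruct (cokernel_factor Hh (idm a)) as [w Hw]. { apply comp_zero_hom. }
  intros x u v E. rewrite <- He, <- !comp_assoc in E. apply Mm in E.
  rewrite <- (comp_id_l u), <- (comp_id_l v), <- Hw, <- !comp_assoc, E. auto.
Qed.

Lemma epi_of_zero_cokernel {a b} (f : Hom a b) :
  (forall x (h : Hom b x), h ∘ f = zero_hom a x -> h = zero_hom b x) -> epi f.
Proof.
  intros H.
  destruct (image_factorization f) as [Q [q [I [m [e [Hq [Hm [He [Ee _]]]]]]]]].
  assert (Hq0 : q = zero_hom b Q) by exact (H Q q (cokernel_comp Hq)).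
  rewrite Hq0 in Hm.
  destruct (kernel_factor Hm (idm b)) as [w Hw]. { apply zero_hom_comp. }
  rewrite <- He. exact (epi_comp Ee (split_epi m w Hw)).
Qed.

Lemma iso_of_mono_epi {a b} (f : Hom a b) : mono f -> epi f -> is_iso f.
Proof.
  intros Hm He. destruct (mono_is_kernel f Hm) as [c [g Hg]].
  assert (Hg0 : g = zero_hom b c).
  { apply He. rewrite (kernel_comp Hg), zero_hom_comp. auto. }
  rewrite Hg0 in Hg.
  destruct (kernel_factor Hg (idm b)) as [h Hh]. { apply zero_hom_comp. }
  exists h. split; auto.
  apply Hm. rewrite comp_assoc, Hh, comp_id_l, comp_id_r. auto.
Qed.

Lemma coproduct_inj_kernel {a b P} {j1 : Hom a P} {j2 : Hom b P} (c1 : Hom P a) (c2 : Hom P b) :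
  is_coproduct j1 j2 -> c1 ∘ j1 = idm a -> c1 ∘ j2 = zero_hom b a -> c2 ∘ j2 = idm b ->
  is_kernel c1 j2.
Proof.
  intros Hc H11 H12 H22. apply kernel_of_mono_cokernel; [exact (split_mono j2 c2 H22) |].
  split. { rewrite H12. apply zero_hom_zero_mor. }
  intros x t Ht. apply zero_morE in Ht. exists (t ∘ j1). split.
  - apply (coproduct_hom_ext Hc); rewrite <- comp_assoc.
    + rewrite H11, comp_id_r. auto.
    + rewrite H12, comp_zero_hom, Ht. auto.
  - intros t' E. rewrite <- E, <- comp_assoc, H11, comp_id_r. auto.
Qed.

Section Biproduct.
Context {A B P : Ob C} {p1 : Hom P A} {p2 : Hom P B} {a : Hom A P} {b : Hom B P}.
Hypotheses (Hp : is_product p1 p2)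
  (Ha1 : p1 ∘ a = idm A) (Ha2 : p2 ∘ a = zero_hom A B)
  (Hb1 : p1 ∘ b = zero_hom B A) (Hb2 : p2 ∘ b = idm B).

Lemma product_proj_cokernel : is_cokernel a p2.
Proof.
  apply cokernel_of_epi_kernel; [exact (split_epi p2 b Hb2) |].
  split. { rewrite Ha2. apply zero_hom_zero_mor. }
  intros x t Ht. apply zero_morE in Ht. exists (p1 ∘ t). split.
  - apply (product_hom_ext Hp); rewrite comp_assoc.
    + rewrite Ha1, comp_id_l. auto.
    + rewrite Ha2, zero_hom_comp, Ht. auto.
  - intros t' E. rewrite <- E, comp_assoc, Ha1, comp_id_l. auto.
Qed.

Section Comparison.
Context {U : Ob C} {j1 : Hom A U} {j2 : Hom B U} {th : Hom U P}.
Hypotheses (Hu : is_coproduct j1 j2) (Hth1 : th ∘ j1 = a) (Hth2 : th ∘ j2 = b).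

Lemma comparison_mono : mono th.
Proof.
  destruct (coproduct_desc Hu (idm A) (zero_hom B A)) as [c1 [C11 C12]].
  destruct (coproduct_desc Hu (zero_hom A B) (idm B)) as [c2 [C21 C22]].
  assert (E1 : p1 ∘ th = c1).
  { apply (coproduct_hom_ext Hu); rewrite <- comp_assoc, ?Hth1, ?Hth2; congruence. }
  assert (E2 : p2 ∘ th = c2).
  { apply (coproduct_hom_ext Hu); rewrite <- comp_assoc, ?Hth1, ?Hth2; congruence. }
  apply mono_of_zero_kernel. intros x k Hk.
  destruct (kernel_factor (coproduct_inj_kernel c1 c2 Hu C11 C12 C22) k) as [k' Hk'].
  { rewrite <- E1, <- comp_assoc, Hk, comp_zero_hom. auto. }
  assert (Hk0 : k' = zero_hom x B).
  { rewrite <- (comp_id_l k'), <- C22, <- comp_assoc, Hk', <- E2, <- comp_assoc, Hk,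
      comp_zero_hom. auto. }
  rewrite <- Hk', Hk0, comp_zero_hom. auto.
Qed.

Lemma comparison_epi : epi th.
Proof.
  apply epi_of_zero_cokernel. intros x t Ht.
  destruct (cokernel_factor product_proj_cokernel t) as [h Hh].
  { rewrite <- Hth1, comp_assoc, Ht, zero_hom_comp. auto. }
  assert (Hh0 : h = zero_hom B x).
  { rewrite <- (comp_id_r h), <- Hb2, comp_assoc, Hh, <- Hth2, comp_assoc, Ht, zero_hom_comp.
    auto. }
  rewrite <- Hh, Hh0, zero_hom_comp. auto.
Qed.

End Comparison.

Lemma product_is_coproduct : is_coproduct a b.
Proof.
  intros x u v.
  destruct (coproduct_exists A B) as [U [j1 [j2 Hu]]].
  destruct (coproduct_desc Hu a b) as [th [Th1 Th2]].
  destruct (iso_of_mono_epi th (comparison_mono Hu Th1 Th2) (comparison_epi Th1 Th2))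
    as [th' [Ti1 Ti2]].
  destruct (coproduct_desc Hu u v) as [w [W1 W2]].
  exists (w ∘ th'). split.
  - split; [rewrite <- Th1 | rewrite <- Th2];
      rewrite <- comp_assoc, (comp_assoc th'), Ti1, comp_id_l; auto.
  - intros h' H1 H2.
    assert (Hth : h' ∘ th = w).
    { apply (coproduct_hom_ext Hu); rewrite <- comp_assoc; congruence. }
    rewrite <- Hth, <- comp_assoc, Ti2, comp_id_r. auto.
Qed.

End Biproduct.

Section Antidiagonal.
Context {Y P : Ob C} {p1 p2 : Hom P Y} {a b : Hom Y P}.
Hypotheses (Hp : is_product p1 p2)
  (Ha1 : p1 ∘ a = idm Y) (Ha2 : p2 ∘ a = zero_hom Y Y)
  (Hb1 : p1 ∘ b = zero_hom Y Y) (Hb2 : p2 ∘ b = idm Y).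

Lemma codiagonal_kernel_proj_mono {K} {s : Hom P Y} {k : Hom K P} :
  s ∘ b = idm Y -> is_kernel s k -> mono (p1 ∘ k).
Proof.
  intros Hsb Hk. apply mono_of_zero_kernel. intros x w Hw.
  assert (Ew : k ∘ w = b ∘ (p2 ∘ (k ∘ w))).
  { apply (product_hom_ext Hp).
    - rewrite (comp_assoc p1 b), Hb1, zero_hom_comp, comp_assoc. auto.
    - rewrite (comp_assoc p2 b), Hb2, comp_id_l. auto. }
  assert (Hp2 : p2 ∘ (k ∘ w) = zero_hom x Y).
  { rewrite <- (comp_id_l (p2 ∘ (k ∘ w))), <- Hsb, <- comp_assoc, <- Ew, comp_assoc,
      (kernel_comp Hk), zero_hom_comp. auto. }
  rewrite Hp2, comp_zero_hom in Ew. exact (mono_comp_zero (kernel_mono Hk) Ew).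
Qed.

Lemma codiagonal_kernel_proj_epi {K} {s : Hom P Y} {k : Hom K P} :
  s ∘ b = idm Y -> is_cokernel k s -> epi (p1 ∘ k).
Proof.
  intros Hsb Hsk. apply epi_of_zero_cokernel. intros x t Ht.
  destruct (cokernel_factor Hsk (t ∘ p1)) as [h Hh]. { rewrite <- comp_assoc. auto. }
  assert (Hh0 : h = zero_hom Y x).
  { rewrite <- (comp_id_r h), <- Hsb, comp_assoc, Hh, <- comp_assoc, Hb1, comp_zero_hom. auto. }
  rewrite <- (comp_id_r t), <- Ha1, comp_assoc, <- Hh, Hh0, !zero_hom_comp. auto.
Qed.

(* The definition of an abelian category provides no additive structure, so
   -1 is built by hand: with s the codiagonal Y × Y -> Y, the kernel of s
   projects isomorphically onto Y, and its inverse is n = (1, -1). *)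
Lemma antidiagonal_exists :
  exists n : Hom Y P, p1 ∘ n = idm Y /\
    forall T (t : Hom P T), t ∘ n = zero_hom Y T -> t ∘ a = t ∘ b.
Proof.
  destruct (product_is_coproduct Hp Ha1 Ha2 Hb1 Hb2 Y (idm Y) (idm Y)) as [s [[Hsa Hsb] _]].
  destruct (kernel_exists s) as [K [k Hk]].
  assert (Hsk : is_cokernel k s) by exact (cokernel_of_epi_kernel (split_epi s a Hsa) Hk).
  destruct (iso_of_mono_epi (p1 ∘ k) (codiagonal_kernel_proj_mono Hsb Hk)
              (codiagonal_kernel_proj_epi Hsb Hsk)) as [iota [I1 I2]].
  exists (k ∘ iota). split.
  - rewrite comp_assoc. auto.
  - intros T t Ht.
    assert (Htk : t ∘ k = zero_hom K T).
    { rewrite <- (comp_id_r (t ∘ k)), <- I1, comp_assoc, <- (comp_assoc t k iota), Ht,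
        zero_hom_comp. auto. }
    destruct (cokernel_factor Hsk t Htk) as [h <-].
    rewrite <- !comp_assoc, Hsa, Hsb. auto.
Qed.

End Antidiagonal.

(* (u, v) is the cokernel of (f, -g) : Y -> X × Z restricted to the two factors. *)
Lemma mono_span_cocone {X Y Z} {f : Hom Y X} (g : Hom Y Z) :
  mono f -> exists W (u : Hom X W) (v : Hom Z W), u ∘ f = v ∘ g /\ mono v.
Proof.
  intros Hf.
  destruct (product_injections_exist X Z) as [XZ [px [pz [ax [bz [Hxz [Ax1 [Ax2 [Bz1 Bz2]]]]]]]]].
  destruct (product_injections_exist Y Y) as [YY [p1 [p2 [a [b [Hyy [A1 [A2 [B1 B2]]]]]]]]].
  destruct (antidiagonal_exists Hyy A1 A2 B1 B2) as [n [Hn1 Hn]].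
  destruct (product_lift Hxz (f ∘ p1) (g ∘ p2)) as [F [F1 F2]].
  assert (HN : px ∘ (F ∘ n) = f).
  { rewrite comp_assoc, F1, <- comp_assoc, Hn1, comp_id_r. auto. }
  assert (MN : mono (F ∘ n)) by (apply (mono_of_comp _ px); rewrite HN; auto).
  destruct (cokernel_exists (F ∘ n)) as [W [c Hc]].
  assert (Fa : F ∘ a = ax ∘ f).
  { apply (product_hom_ext Hxz); rewrite !comp_assoc.
    - rewrite F1, Ax1, <- comp_assoc, A1, comp_id_r, comp_id_l. auto.
    - rewrite F2, Ax2, <- comp_assoc, A2, comp_zero_hom, zero_hom_comp. auto. }
  assert (Fb : F ∘ b = bz ∘ g).
  { apply (product_hom_ext Hxz); rewrite !comp_assoc.
    - rewrite F1, Bz1, <- comp_assoc, B1, comp_zero_hom, zero_hom_comp. auto.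
    - rewrite F2, Bz2, <- comp_assoc, B2, comp_id_r, comp_id_l. auto. }
  exists W, (c ∘ ax), (c ∘ bz). split.
  - rewrite <- !comp_assoc, <- Fa, <- Fb, !comp_assoc. apply Hn.
    rewrite <- comp_assoc. exact (cokernel_comp Hc).
  - apply mono_of_zero_kernel. intros x w Hw.
    destruct (kernel_factor (kernel_of_mono_cokernel MN Hc) (bz ∘ w)) as [h Hh].
    { rewrite comp_assoc. auto. }
    assert (Hh0 : h = zero_hom x Y).
    { apply (mono_comp_zero Hf).
      rewrite <- HN, <- comp_assoc, Hh, comp_assoc, Bz1, zero_hom_comp. auto. }
    rewrite Hh0, comp_zero_hom in Hh.
    rewrite <- (comp_id_l w), <- Bz2, <- comp_assoc, <- Hh, comp_zero_hom. auto.
Qed.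

Section Pushout.
Context {X Y Z P : Ob C} {f : Hom Y X} {g : Hom Y Z} {i1 : Hom X P} {i2 : Hom Z P}.
Hypothesis Hpo : is_pushout f g i1 i2.

Lemma pushout_mono : mono f -> mono i2.
Proof.
  intros Hf. destruct (mono_span_cocone g Hf) as [W [u [v [Huv Mv]]]].
  destruct (proj2 Hpo W u v Huv) as [h [[_ Hh2] _]].
  apply (mono_of_comp i2 h). rewrite Hh2. auto.
Qed.

Lemma pushout_cokernel {Q} {q : Hom X Q} {r : Hom P Q} :
  is_cokernel f q -> r ∘ i1 = q -> r ∘ i2 = zero_hom Z Q -> is_cokernel i2 r.
Proof.
  intros Hq R1 R2. split. { rewrite R2. apply zero_hom_zero_mor. }
  intros W v Hv. apply zero_morE in Hv.
  destruct (cokernel_factor Hq (v ∘ i1)) as [w Hw].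
  { rewrite <- comp_assoc, (proj1 Hpo), comp_assoc, Hv, zero_hom_comp. auto. }
  exists w. split.
  - apply (pushout_hom_ext Hpo); rewrite <- comp_assoc.
    + rewrite R1. auto.
    + rewrite R2, comp_zero_hom, Hv. auto.
  - intros w' E. apply (cokernel_epi Hq). rewrite Hw, <- R1, comp_assoc, E. auto.
Qed.

End Pushout.

Lemma gaddA (x y w : gterm C) : grel C (x +' (y +' w)) (x +' y +' w).
Proof. apply grel_assoc. Qed.

Lemma gaddC (x y : gterm C) : grel C (x +' y) (y +' x).
Proof. apply grel_comm. Qed.

Lemma gadd0l (x : gterm C) : grel C (gzero +' x) x.
Proof. apply grel_zero. Qed.

Lemma gadd0r (x : gterm C) : grel C (x +' gzero) x.
Proof. rewrite gaddC. apply gadd0l. Qed.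

Lemma gaddNl (x : gterm C) : grel C (-' x +' x) gzero.
Proof. apply grel_neg. Qed.

Lemma gaddNr (x : gterm C) : grel C (x +' -' x) gzero.
Proof. rewrite gaddC. apply gaddNl. Qed.

Lemma gneg0 : grel C (-' gzero) gzero.
Proof. rewrite <- (gadd0r (-' gzero)). apply gaddNl. Qed.

(* z -> z -> z with identity maps is short exact, so [z] = [z] + [z]. *)
Lemma ggen_zero_obj : grel C (ggen z) gzero.
Proof.
  assert (Hzz : grel C (ggen z) (ggen z +' ggen z)).
  { apply grel_ses with (f := idm z) (g := idm z). split; [|split].
    - exact (split_mono (idm z) (idm z) (comp_id_l (idm z))).
    - exact (split_epi (idm z) (idm z) (comp_id_l (idm z))).
    - split.
      + exists z, (idm z), (idm z). auto.
      + intros x g _. exists g. rewrite comp_id_l.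
        split; [auto | intros h' E; rewrite comp_id_l in E; auto]. }
  transitivity (-' ggen z +' (ggen z +' ggen z)).
  - rewrite gaddA, gaddNl, gadd0l. reflexivity.
  - rewrite <- Hzz. apply gaddNl.
Qed.

Lemma short_exact_of_mono_cokernel {a b Q} {f : Hom a b} {q : Hom b Q} :
  mono f -> is_cokernel f q -> short_exact f q.
Proof.
  intros Hf Hq. split; [auto | split].
  - exact (cokernel_epi Hq).
  - exact (kernel_of_mono_cokernel Hf Hq).
Qed.

Lemma pushout_class {X Y Z P} {f : Hom Y X} {g : Hom Y Z} {i1 : Hom X P} {i2 : Hom Z P} :
  is_pushout f g i1 i2 -> mono f ->
  grel C (ggen P) (ggen X +' -' ggen Y +' ggen Z).
Proof.
  intros Hpo Hf.
  destruct (cokernel_exists f) as [Q [q Hq]].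
  destruct (proj2 Hpo Q q (zero_hom Z Q)) as [r [[R1 R2] _]].
  { rewrite (cokernel_comp Hq), zero_hom_comp. auto. }
  assert (Hr : is_cokernel i2 r) by exact (pushout_cokernel Hpo Hq R1 R2).
  rewrite (grel_ses (short_exact_of_mono_cokernel Hf Hq)),
    (grel_ses (short_exact_of_mono_cokernel (pushout_mono Hpo Hf) Hr)).
  rewrite (gaddC (ggen Y)), <- (gaddA (ggen Q)), gaddNr, gadd0r, gaddC. reflexivity.
Qed.


Local Notation h0 := (@hgen C z).
Local Notation hadd x y := (hbr x h0 y).
Local Notation hneg x := (hbr h0 x h0).

Lemma haddNr (x : hterm C) : hrel C (hadd x (hneg x)) h0.
Proof. rewrite hrel_assoc, hrel_mal_r, hrel_mal_l. reflexivity. Qed.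

Lemma haddNl (x : hterm C) : hrel C (hadd (hneg x) x) h0.
Proof. rewrite <- hrel_assoc, hrel_mal_l, hrel_mal_r. reflexivity. Qed.

Lemma hbr_sum (x y w : hterm C) : hrel C (hbr x y w) (hadd (hadd x (hneg y)) w).
Proof.
  rewrite (hrel_assoc x h0 h0 y h0), hrel_mal_r, <- hrel_assoc, hrel_mal_l. reflexivity.
Qed.

Definition hcommute (x y : hterm C) : Prop := hrel C (hadd x y) (hadd y x).

Lemma hcommute_sym (x y : hterm C) : hcommute x y -> hcommute y x.
Proof. unfold hcommute. intros H. symmetry. exact H. Qed.

Lemma hcommute_add (x y w : hterm C) : hcommute x y -> hcommute x w -> hcommute x (hadd y w).
Proof.
  unfold hcommute. intros Hy Hw.
  rewrite hrel_assoc, Hy, <- hrel_assoc, Hw, hrel_assoc. reflexivity.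
Qed.

Lemma hcommute_neg (x y : hterm C) : hcommute x y -> hcommute x (hneg y).
Proof.
  unfold hcommute. intros Hy. symmetry.
  transitivity (hadd (hadd (hneg y) x) (hadd y (hneg y))).
  { rewrite haddNr. symmetry. apply hrel_mal_r. }
  rewrite hrel_assoc, <- (hrel_assoc (hneg y) h0 x h0 y), Hy,
    (hrel_assoc (hneg y) h0 y h0 x), haddNl, hrel_mal_l.
  reflexivity.
Qed.

Lemma hcommute_hbr (x y w v : hterm C) :
  hcommute x y -> hcommute x w -> hcommute x v -> hcommute x (hbr y w v).
Proof.
  intros Hy Hw Hv. unfold hcommute. rewrite (hbr_sum y w v).
  apply hcommute_add; [apply hcommute_add; [| apply hcommute_neg] |]; auto.
Qed.

Lemma coproduct_pushout_zero {A B U} {j1 : Hom A U} {j2 : Hom B U} :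
  is_coproduct j1 j2 -> is_pushout (from_zero A) (from_zero B) j1 j2.
Proof.
  intros Hu. split.
  - rewrite (from_zero_unique (j1 ∘ from_zero A)), (from_zero_unique (j2 ∘ from_zero B)). auto.
  - intros W u v _. apply Hu.
Qed.

Lemma hcommute_hgen A B : hcommute (hgen A) (hgen B).
Proof.
  destruct (coproduct_exists A B) as [U [j1 [j2 Hu]]].
  unfold hcommute.
  rewrite (hrel_pushout (coproduct_pushout_zero Hu) (or_introl (from_zero_mono A))),
    (hrel_pushout (coproduct_pushout_zero (coproduct_sym Hu)) (or_introl (from_zero_mono B))).
  reflexivity.
Qed.

Lemma hcommute_all (s t : hterm C) : hcommute s t.
Proof.
  assert (Hgen : forall (s : hterm C) B, hcommute s (hgen B)).
  { intros s'; induction s'; intros B.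
    - apply hcommute_hgen.
    - apply hcommute_sym, hcommute_hbr; apply hcommute_sym; auto. }
  induction t.
  - apply Hgen.
  - apply hcommute_hbr; auto.
Qed.

Lemma short_exact_pushout {A B D} {f : Hom A B} {g : Hom B D} :
  short_exact f g -> is_pushout (to_zero A) f (from_zero D) g.
Proof.
  intros [_ [Hg Hk]].
  assert (Hcok := cokernel_of_epi_kernel Hg Hk).
  split. { rewrite (kernel_comp Hk). reflexivity. }
  intros W u v E.
  destruct (cokernel_factor Hcok v) as [h Hh].
  { rewrite <- E, (from_zero_unique u). reflexivity. }
  exists h. split.
  - rewrite (from_zero_unique u), (from_zero_unique (h ∘ from_zero D)). auto.
  - intros h' _ E2. apply (cokernel_epi Hcok). congruence.
Qed.

Lemma hrel_short_exact {A B D} {f : Hom A B} {g : Hom B D} :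
  short_exact f g -> hrel C (hgen B) (hadd (hgen A) (hgen D)).
Proof.
  intros Hfg.
  rewrite <- (hrel_pushout (short_exact_pushout Hfg) (or_intror (proj1 Hfg))).
  rewrite hrel_assoc, hrel_mal_r, hrel_mal_l. reflexivity.
Qed.

Fixpoint gterm_of_hterm (s : hterm C) : gterm C :=
  match s with
  | hgen A => ggen A
  | hbr x y w => gterm_of_hterm x +' -' gterm_of_hterm y +' gterm_of_hterm w
  end.

Fixpoint hterm_of_gterm (u : gterm C) : hterm C :=
  match u with
  | ggen A => hgen A
  | gzero => h0
  | gadd u v => hadd (hterm_of_gterm u) (hterm_of_gterm v)
  | gneg u => hneg (hterm_of_gterm u)
  end.

Lemma gterm_of_hterm_compat (s t : hterm C) :
  hrel C s t -> grel C (gterm_of_hterm s) (gterm_of_hterm t).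
Proof.
  induction 1; simpl.
  - reflexivity.
  - symmetry; auto.
  - etransitivity; eauto.
  - rewrite IHhrel1, IHhrel2, IHhrel3. reflexivity.
  - rewrite !gaddA. reflexivity.
  - rewrite gaddNr, gadd0l. reflexivity.
  - rewrite <- gaddA, gaddNl, gadd0r. reflexivity.
  - apply grel_iso; auto.
  - symmetry. destruct H0 as [Hf | Hg].
    + exact (pushout_class H Hf).
    + rewrite (pushout_class (pushout_sym H) Hg).
      rewrite (gaddC (ggen Z +' -' ggen Y)), (gaddC (ggen Z)), gaddA. reflexivity.
Qed.

Lemma hterm_of_gterm_compat (u v : gterm C) :
  grel C u v -> hrel C (hterm_of_gterm u) (hterm_of_gterm v).
Proof.
  induction 1; simpl.
  - reflexivity.
  - symmetry; auto.
  - etransitivity; eauto.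
  - rewrite IHgrel1, IHgrel2. reflexivity.
  - rewrite IHgrel. reflexivity.
  - apply hrel_assoc.
  - apply hcommute_all.
  - apply hrel_mal_l.
  - apply haddNl.
  - apply hrel_iso; auto.
  - exact (hrel_short_exact H).
Qed.

Lemma hterm_of_gtermK (u : gterm C) : grel C (gterm_of_hterm (hterm_of_gterm u)) u.
Proof.
  induction u; simpl.
  - reflexivity.
  - apply ggen_zero_obj.
  - rewrite IHu1, IHu2, ggen_zero_obj, gneg0, gadd0r. reflexivity.
  - rewrite IHu, ggen_zero_obj, gadd0l, gadd0r. reflexivity.
Qed.

Lemma gterm_of_htermK (s : hterm C) : hrel C (hterm_of_gterm (gterm_of_hterm s)) s.
Proof.
  induction s; simpl.
  - reflexivity.
  - rewrite IHs1, IHs2, IHs3. symmetry. apply hbr_sum.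
Qed.

End Theory.

Section Quotient.
Context {T : Type} {R : T -> T -> Prop} `{Equivalence T R}.

Lemma cls_eq s t : R s t -> cls R s = cls R t.
Proof.
  intros Hst. unfold cls.
  assert (E : R s = R t).
  { apply functional_extensionality; intro u. apply propositional_extensionality.
    split; intro; [symmetry in Hst |]; etransitivity; eauto. }
  generalize (ex_intro (fun t0 => forall u, R s u <-> R t0 u) s (fun u => iff_refl (R s u))).
  generalize (ex_intro (fun t0 => forall u, R t u <-> R t0 u) t (fun u => iff_refl (R t u))).
  rewrite E. intros p1 p2. f_equal. apply proof_irrelevance.
Qed.

Lemma cls_inj s t : cls R s = cls R t -> R s t.
Proof.
  intros E. apply (f_equal (@proj1_sig _ _)) in E. simpl in E.
  rewrite E. reflexivity.
Qed.

Lemma cls_surj (x : quot R) : exists t, x = cls R t.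
Proof.
  destruct x as [p [t Ht]]. exists t. unfold cls.
  assert (E : p = R t).
  { apply functional_extensionality; intro u. apply propositional_extensionality. auto. }
  subst p. f_equal. apply proof_irrelevance.
Qed.

Definition rep (x : quot R) : T :=
  proj1_sig (constructive_indefinite_description _ (proj2_sig x)).

Lemma rep_cls t : R (rep (cls R t)) t.
Proof.
  unfold rep. destruct constructive_indefinite_description as [r Hr]. simpl.
  symmetry. apply Hr. reflexivity.
Qed.

End Quotient.

Definition quot_map {T U : Type} {R : T -> T -> Prop} (S : U -> U -> Prop) (f : T -> U)
    (x : quot R) : quot S :=
  cls S (f (rep x)).

Lemma quot_map_cls {T U : Type} {R : T -> T -> Prop} {S : U -> U -> Prop}
    `{Equivalence T R} `{Equivalence U S} (f : T -> U) :
  (forall s t, R s t -> S (f s) (f t)) -> forall t, quot_map S f (cls R t) = cls S (f t).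
Proof. intros Hf t. apply cls_eq, Hf, rep_cls. Qed.

Theorem theorem2p4 (C : Category) (HC : is_abelian C) (z : Ob C) (Hz : is_zero_obj z) :
  exists psi : K0heap C -> K0c C,
    (* well defined: psi (class of A) = class of A *)
    (forall A : Ob C, psi (cls (hrel C) (hgen A)) = cls (grel C) (ggen A)) /\
    (* group homomorphism (K0heap, +_0bar) -> K0c, where x +_0bar y = [x, 0bar, y] *)
    (forall (s t : hterm C) (u v : gterm C),
        psi (cls (hrel C) s) = cls (grel C) u ->
        psi (cls (hrel C) t) = cls (grel C) v ->
        psi (cls (hrel C) (hbr s (hgen z) t)) = cls (grel C) (gadd u v)) /\
    (* bijective *)
    (forall x y : K0heap C, psi x = psi y -> x = y) /\
    (forall y : K0c C, exists x : K0heap C, psi x = y).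
Proof.
  pose (psi := quot_map (grel C) (gterm_of_hterm C) : K0heap C -> K0c C).
  assert (Hpsi : forall s, psi (cls (hrel C) s) = cls (grel C) (gterm_of_hterm C s))
    by exact (quot_map_cls _ (gterm_of_hterm_compat C z Hz HC)).
  exists psi. split; [| split; [| split]].
  - intros A. apply Hpsi.
  - intros s t u v Hs Ht. rewrite Hpsi in *. apply cls_inj in Hs, Ht.
    apply cls_eq. simpl. rewrite Hs, Ht, (ggen_zero_obj C z Hz), gneg0, gadd0r. reflexivity.
  - intros x y E.
    destruct (cls_surj x) as [s ->], (cls_surj y) as [t ->].
    rewrite !Hpsi in E. apply cls_inj, (hterm_of_gterm_compat C z Hz HC) in E.
    rewrite !gterm_of_htermK in E. apply cls_eq. exact E.
  - intros y. destruct (cls_surj y) as [u ->].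
    exists (cls (hrel C) (hterm_of_gterm C z u)).
    rewrite Hpsi. apply cls_eq, hterm_of_gtermK. exact Hz.
Qed.
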